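(* Let $n$ be an odd integer with $n>1$, and let $\mathcal{A}=(Q,A,\delta,q_0,F)$ be a circular semi-flower automaton with $|Q|=n$. Let $b\in A$. If the cycle formed by the $b$-edges of $\mathcal{A}$ has length $2$, then $\mathcal{A}$ is synchronizing.
   Context: An automaton over a finite alphabet $A$ is a quintuple $\mathcal{A}=(Q,A,\delta,q_0,F)$ with $Q$ a non-empty finite set of states, initial state $q_0\in Q$, set of final states $F\subseteq Q$, and total transition function $\delta:Q\times A\to Q$, extended to words in the usual way; each letter thus induces a transformation of $Q$. Its digraph has vertex set $Q$ and, for each $p\in Q$, $a\in A$, an edge labeled $a$ (an $a$-edge) from $p$ to $\delta(p,a)$. A path is an alternating sequence of distinct vertices and edges, each edge going from the preceding vertex to the next; a cycle is a path with at least one edge whose initial and terminal vertices coincide. A state $q$ is accessible if there is a path from $q_0$ to $q$, and co-accessible if there is a path from $q$ to a final state. $\mathcal{A}$ is a semi-flower automaton if $F=\{q_0\}$, every state is accessible and co-accessible, and every cycle passes through $q_0$. $\mathcal{A}$ is circular if some letter induces a circular permutation (a single cycle of length $|Q|$) on $Q$. In a semi-flower automaton, the sub-digraph formed by the $b$-edges (for a fixed letter $b$) contains exactly one cycle, called the $b$-cycle. $\mathcal{A}$ is synchronizing if there is a word $w\in A^*$ such that $\{\delta(q,w): q\in Q\}$ is a singleton. *)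

From mathcomp Require Import all_boot.
Set Implicit Arguments. Unset Strict Implicit. Unset Printing Implicit Defensive.

(* An automaton (Q, A, delta, q0, F) is given by its components:
   Q A : finType, delta : Q -> A -> Q (total), q0 : Q, F : {set Q}. *)
Section Automata.
Variables (Q A : finType) (delta : Q -> A -> Q).

Fixpoint delta_star (q : Q) (w : seq A) : Q :=
  if w is a :: w' then delta_star (delta q a) w' else q.

Fixpoint trace (q : Q) (w : seq A) : seq Q :=
  if w is a :: w' then q :: trace (delta q a) w' else [:: q].

Definition is_path (p : Q) (w : seq A) (r : Q) : bool :=
  uniq (trace p w) && (delta_star p w == r).

(* a cycle: at least one edge, initial = terminal vertex, and the other
   vertices are pairwise distinct *)
Definition is_cycle (p : Q) (w : seq A) : bool :=
  [&& w != [::], delta_star p w == p & uniq (take (size w) (trace p w))].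

Definition accessible (q0 q : Q) : Prop := exists w, is_path q0 w q.

Definition coaccessible (F : {set Q}) (q : Q) : Prop :=
  exists w f, f \in F /\ is_path q w f.

Definition semi_flower (q0 : Q) (F : {set Q}) : Prop :=
  [/\ F = [set q0],
      forall q, accessible q0 q,
      forall q, coaccessible F q &
      forall p w, is_cycle p w -> q0 \in trace p w].

(* the letter a induces a circular permutation (one cycle of length |Q|) *)
Definition circular_letter (a : A) : Prop :=
  injective (fun q => delta q a) /\ forall q, order (fun x => delta x a) q = #|Q|.

Definition circular : Prop := exists a, circular_letter a.

Definition synchronizing : Prop :=
  exists w : seq A, exists p : Q, [set delta_star q w | q : Q] = [set p].

End Automata.

From mathcomp Require Import all_boot.
Set Implicit Arguments. Unset Strict Implicit. Unset Printing Implicit Defensive.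

(* Write [g] for the action of [b] and [f] for a letter acting as a circular
   permutation. Every [g]-orbit ends in a [g]-cycle, which must pass through
   [q0]; since there is a [g]-cycle of length 2, it is the cycle {q0, r} with
   r = g q0, so [g^n] maps all states into {q0, r}. Write r = h q0 with [h] a
   power of [f]; then [h^n] is the identity. As [n] is odd, the map
   x |-> g^n x cannot take different values at consecutive points of the
   [h]-orbit of [q0] all around it, so g^n (h y) = g^n y for some [y] = f^k q0.
   Hence b^n a^k b^n synchronizes: b^n moves every state into {q0, r}, and
   a^k b^n sends both [q0] and [r] to g^n y. *)

Lemma odd_iter_cycle_same_colour (T : Type) (h : T -> T) (c : T -> bool) x n :
  odd n -> iter n h x = x ->
  exists2 k, k < n & c (iter k.+1 h x) = c (iter k h x).
Proof.
move=> odd_n hn_x.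
have [/hasP[k] | /hasPn alternate] :=
  boolP (has (fun k => c (iter k.+1 h x) == c (iter k h x)) (iota 0 n)).
  by rewrite mem_iota => /andP[_ lt_kn] /eqP; exists k.
have colour k : k <= n -> c (iter k h x) = c x (+) odd k.
  elim: k => [|k IHk] lt_kn; first by rewrite addbF.
  have := alternate k; rewrite mem_iota lt_kn (IHk (ltnW lt_kn)) => /(_ isT).
  by rewrite oddS addbN; case: (c (iter k.+1 h x)); case: (c x (+) odd k).
by have := colour n (leqnn n); rewrite hn_x odd_n addbT; case: (c x).
Qed.

Lemma eq_in_pair (T : eqType) (u v x y : T) :
  x \in [:: u; v] -> y \in [:: u; v] -> (x == u) = (y == u) -> x = y.
Proof.
rewrite !inE => /orP[]/eqP-> /orP[]/eqP-> //; rewrite eqxx.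
  by move=> /esym/eqP.
by move=> /eqP.
Qed.

Lemma orbit_ends_in_cycle (T : finType) (f : T -> T) x :
  exists j L, [/\ 0 < L, j + L <= #|T|, iter L f (iter j f x) = iter j f x
                & uniq (traject f (iter j f x) L)].
Proof.
have /trajectP[j lt_j_ord fj_x] := looping_order f x.
have le_j_ord := ltnW lt_j_ord.
exists j, (order f x - j); rewrite subn_gt0 subnKC //; split=> //.
- exact: max_card.
- by rewrite -iterD subnK.
- have := orbit_uniq f x.
  by rewrite /orbit -{1}(subnKC le_j_ord) trajectD cat_uniq => /and3P[].
Qed.

Lemma circular_iter_card (T : finType) (f : T -> T) :
  injective f -> (forall x, order f x = #|T|) -> forall x, iter #|T| f x = x.
Proof. by move=> inj_f ord_f x; rewrite -(ord_f x) iter_order. Qed.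

Lemma circular_orbit_full (T : finType) (f : T -> T) :
  (forall x, order f x = #|T|) -> forall x y, exists k, y = iter k f x.
Proof.
move=> ord_f x y.
have /subset_cardP orbit_full : #|fconnect f x| = #|predT : {pred T}|.
  by rewrite cardT -/(order f x) ord_f cardE.
have := orbit_full (subset_predT _) y.
by rewrite !inE fconnect_orbit => /trajectP[k _ ->]; exists k.
Qed.

Section Automaton.
Variables (Q A : finType) (delta : Q -> A -> Q).

Definition act (c : A) (q : Q) : Q := delta q c.

Lemma delta_star_cat q w1 w2 :
  delta_star delta q (w1 ++ w2) = delta_star delta (delta_star delta q w1) w2.
Proof. by elim: w1 q => //= c w IHw q. Qed.

Lemma delta_star_nseq q m c : delta_star delta q (nseq m c) = iter m (act c) q.
Proof. by elim: m q => //= m IHm q; rewrite IHm -iterSr. Qed.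

Lemma trace_nseq q m c : trace delta q (nseq m c) = traject (act c) q m.+1.
Proof. by elim: m q => //= m IHm q; rewrite IHm. Qed.

Lemma is_cycle_nseq q L c :
  is_cycle delta q (nseq L c) =
  [&& 0 < L, iter L (act c) q == q & uniq (traject (act c) q L)].
Proof.
by rewrite /is_cycle delta_star_nseq trace_nseq take_traject ?size_nseq //; case: L.
Qed.

Lemma synchronizingP w p :
  (forall q, delta_star delta q w = p) -> synchronizing delta.
Proof.
move=> wE; exists w, p; apply/setP => q; rewrite !inE.
apply/imsetP/eqP => [[q' _ ->] // | ->].
by exists p; rewrite ?wE.
Qed.

Section CyclesThroughRoot.
Variable q0 : Q.
Hypothesis root_on_cycles :
  forall p w, is_cycle delta p w -> q0 \in trace delta p w.

Lemma letter_reaches_root c x : exists2 i, i <= #|Q| & iter i (act c) x = q0.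
Proof.
have [j [L [L_gt0 jL_le cycle_j uniq_j]]] := orbit_ends_in_cycle (act c) x.
have : is_cycle delta (iter j (act c) x) (nseq L c).
  by rewrite is_cycle_nseq L_gt0 cycle_j eqxx.
move=> /root_on_cycles; rewrite trace_nseq => /trajectP[i lt_iL ->].
exists (i + j); last by rewrite iterD.
by apply: leq_trans jL_le; rewrite addnC leq_add2l.
Qed.

Lemma root_on_two_cycle c q :
  is_cycle delta q [:: c; c] -> act c (act c q0) = q0.
Proof.
move=> cycle_q; have cc_q : act c (act c q) = q by case/and3P: cycle_q => _ /eqP.
have := root_on_cycles cycle_q.
have -> : trace delta q [:: c; c] = [:: q; act c q; act c (act c q)] by [].
by rewrite !inE; case/or3P => /eqP ->; rewrite ?cc_q.
Qed.

Lemma iter_card_in_two_cycle c :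
  act c (act c q0) = q0 -> forall x, iter #|Q| (act c) x \in [:: q0; act c q0].
Proof.
move=> cc_q0 x.
have on_two_cycle m : iter m (act c) q0 \in [:: q0; act c q0].
  elim: m => [|m]; first by rewrite inE eqxx.
  by rewrite iterS !inE => /orP[] /eqP ->; rewrite ?cc_q0 eqxx ?orbT.
have [i le_i_card ci_x] := letter_reaches_root c x.
by rewrite -(subnK le_i_card) iterD ci_x.
Qed.

End CyclesThroughRoot.
End Automaton.

Theorem mainTheorem3 (n : nat) (Q A : finType) (delta : Q -> A -> Q)
    (q0 : Q) (F : {set Q}) (b : A) :
  odd n -> 1 < n -> #|Q| = n ->
  semi_flower delta q0 F ->
  circular delta ->
  (* the b-cycle has length 2: some cycle consisting of b-edges has 2 edges *)
  (exists q : Q, is_cycle delta q [:: b; b]) ->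
  synchronizing delta.
Proof.
move=> odd_n _ card_Q [_ _ _ root_on_cycles] [a [inj_a ord_a]] [q cycle_q].
have odd_card : odd #|Q| by rewrite card_Q.
set g := act delta b; set f := act delta a; set pi := iter #|Q| g.
have gg_q0 : g (g q0) = q0 := root_on_two_cycle root_on_cycles cycle_q.
have pi_two_cycle x : pi x \in [:: q0; g q0] :=
  iter_card_in_two_cycle root_on_cycles gg_q0 x.
have [p g_q0E] : exists p, g q0 = iter p f q0 := circular_orbit_full ord_a q0 (g q0).
have h_card_q0 : iter #|Q| (iter p f) q0 = q0.
  by rewrite -iterM mulnC iterM iter_fix ?circular_iter_card.
have [k _ same_colour] :=
  odd_iter_cycle_same_colour (fun x => pi x == q0) odd_card h_card_q0.
set y := iter k (iter p f) q0 in same_colour.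
have pi_hy : pi (iter p f y) = pi y :=
  eq_in_pair (pi_two_cycle _) (pi_two_cycle _) same_colour.
have yE : y = iter (k * p) f q0 by rewrite iterM.
apply: (@synchronizingP _ _ _ (nseq #|Q| b ++ nseq (k * p) a ++ nseq #|Q| b) (pi y)).
move=> x; rewrite !delta_star_cat !delta_star_nseq -/g -/f -/pi.
have := pi_two_cycle x; rewrite !inE => /orP[] /eqP ->; first by rewrite -yE.
by rewrite g_q0E -iterD addnC iterD -yE.
Qed.
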